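(* Let $(V,Y(\cdot,(x,\varphi)),\mathbf{1},\tau)$ be an $N=1$ NS-VOSA over $\bigwedge_*$ with odd formal variables. Let $t^{1/2}$ be an even formal variable, let $B=\{B_j\}_{j\in\mathbb{Z}_+}$ be a sequence of even elements and $N=\{N_{j-1/2}\}_{j\in\mathbb{Z}_+}$ a sequence of odd elements of $\bigwedge_\infty$. Then for every $u\in V$, $$\Big[\sum_{j\in\mathbb{Z}_+}\big(t^jB_jL(-j)+t^{j-\frac12}N_{j-\frac12}G(-j+\tfrac12)\big),\,Y(u,(x,\varphi))\Big]$$ $$=Y\Big(\sum_{m=-1}^{\infty}\sum_{j\in\mathbb{Z}_+}\binom{-j+1}{m+1}x^{-j-m}\Big(\big(t^jB_j+2\varphi t^{j-\frac12}N_{j-\frac12}\big)L(m)+\big(t^{j-\frac12}N_{j-\frac12}+\varphi x^{-1}\tfrac{(-j-m)}{2}t^jB_j\big)G(m+\tfrac12)\Big)u,\,(x,\varphi)\Big),$$ where the bracket is the supercommutator and both sides are formal series in $t^{1/2}$, $x,x^{-1}$, $\varphi$ with coefficients in $\mathrm{End}$ of $V$ (extended to the completion).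
   Context: Let $\bigwedge_\infty$ be the infinite Grassmann algebra over $\mathbb{C}$ and $\bigwedge_*\subseteq\bigwedge_\infty$ a Grassmann subalgebra. Even formal variables commute with everything; odd formal variables anticommute with odd formal variables and odd Grassmann elements. Binomial expressions $(a+b)^n$ in even quantities are expanded in nonnegative powers of the second; functions of even and odd variables are expanded about the even ones, e.g. $f(x+\varphi_1\varphi_2)=f(x)+\varphi_1\varphi_2f'(x)$; $\delta(x)=\sum_{n\in\mathbb{Z}}x^n$. An $N=1$ NS-VOSA over $\bigwedge_*$ with odd formal variables is a $\frac12\mathbb{Z}$-graded and $\mathbb{Z}_2$-graded $\bigwedge_\infty$-module $V=\coprod_{k}V_{(k)}=V^0\oplus V^1$ on which only $\bigwedge_*$ acts nontrivially, with $\dim V_{(k)}<\infty$ and $V_{(k)}=0$ for $k$ sufficiently small, together with a linear map $v\mapsto Y(v,(x,\varphi))=\sum_{n\in\mathbb{Z}}v_nx^{-n-1}+\varphi\sum_{n\in\mathbb{Z}}v_{n-1/2}x^{-n-1}\in(\mathrm{End}\,V)[[x,x^{-1}]][\varphi]$ ($v_n$ of parity $\eta(v)$, $v_{n-1/2}$ of opposite parity; $x$ even, $\varphi$ odd), and vectors $\mathbf 1\in V^0_{(0)}$, $\tau\in V^1_{(3/2)}$, such that: $u_nv=0$ for $n\in\frac12\mathbb{Z}$ large; $Y(\mathbf1,(x,\varphi))=1$; $Y(v,(x,\varphi))\mathbf1\in V[[x]][\varphi]$ with value $v$ at $(x,\varphi)=0$; the Jacobi identity $x_0^{-1}\delta(\frac{x_1-x_2-\varphi_1\varphi_2}{x_0})Y(u,(x_1,\varphi_1))Y(v,(x_2,\varphi_2))-(-1)^{\eta(u)\eta(v)}x_0^{-1}\delta(\frac{x_2-x_1+\varphi_1\varphi_2}{-x_0})Y(v,(x_2,\varphi_2))Y(u,(x_1,\varphi_1))=x_2^{-1}\delta(\frac{x_1-x_0-\varphi_1\varphi_2}{x_2})Y(Y(u,(x_0,\varphi_1-\varphi_2))v,(x_2,\varphi_2))$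 holds for homogeneous $u,v$; writing $Y(\tau,(x,\varphi))=\sum_{n}G(n+\frac12)x^{-n-2}+2\varphi\sum_nL(n)x^{-n-2}$, the operators $L(n),G(n+\frac12)$ satisfy the $N=1$ Neveu–Schwarz relations $[L(m),L(n)]=(m-n)L(m+n)+\frac{m^3-m}{12}\delta_{m+n,0}c$, $[G(m+\frac12),L(n)]=(m-\frac{n-1}{2})G(m+n+\frac12)$, $[G(m+\frac12),G(n-\frac12)]=2L(m+n)+\frac{m^2+m}{3}\delta_{m+n,0}c$ for some $c\in\mathbb{C}$ (the rank); $L(0)v=kv$ for $v\in V_{(k)}$; and $(\partial_\varphi+\varphi\partial_x)Y(v,(x,\varphi))=Y(G(-\frac12)v,(x,\varphi))$. *)

From mathcomp Require Import Rstruct.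
From HB Require Import structures.
From mathcomp Require Import all_boot all_order all_algebra.
From mathcomp Require Import complex finmap.
Set Implicit Arguments. Unset Strict Implicit. Unset Printing Implicit Defensive.
Import Order.TTheory GRing.Theory Num.Theory.
Local Open Scope ring_scope.

Notation CC := (complex.complex Rdefinitions.R).

(* The infinite Grassmann algebra.  Generators zeta_0, zeta_1, ...;    *)
(* an element is the coefficient function S |-> coefficient of the     *)
(* monomial zeta_{s1} ... zeta_{sk} (s1 < ... < sk, S = {s1..sk}).     *)
(* Elements of /\_oo are those with finite support ([gfin]).           *)
Definition grass := {fset nat} -> CC.

Definition gfin (a : grass) : Prop :=
  exists s : seq {fset nat}, forall S, S \notin s -> a S = 0.

(* sign of zeta_T zeta_U = sign * zeta_(T u U) for disjoint T, U *)
Definition gsign (T U : {fset nat}) : CC :=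
  (-1) ^+ (\sum_(i <- T) count (fun j => (j < i)%N) U)%N.

Definition gadd (a b : grass) : grass := fun S => a S + b S.
Definition gmul (a b : grass) : grass := fun S =>
  \sum_(T <- fpowerset S) gsign T ((S `\` T)%fset) * a T * b ((S `\` T)%fset).
Definition gcst (c : CC) : grass := fun S => if S == fset0%fset then c else 0.
Definition ggen (i : nat) : grass := fun S => (S == [fset i]%fset)%:R.

Definition geven (a : grass) : Prop := forall S, odd #|` S| -> a S = 0.
Definition godd (a : grass) : Prop := forall S, ~~ odd #|` S| -> a S = 0.
Definition ghom (e : bool) (a : grass) : Prop := if e then godd a else geven a.

(* The Grassmann subalgebra /\_* generated by the generators zeta_i, i in gens;
   gproj is the projection of /\_oo onto /\_* killing the other generators. *)
Definition gproj (gens : pred nat) (a : grass) : grass :=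
  fun S => if all gens S then a S else 0.

Definition sgnv (V : zmodType) (b : bool) (v : V) : V := if b then - v else v.

Definition binz (l : int) (i : nat) : CC :=
  (\prod_(k < i) (l%:~R - k%:R)) / (i`!)%:R.

(* "the (eventually zero) series sum_(i>=0) f i equals s" *)
Definition sums (V : zmodType) (f : nat -> V) (s : V) : Prop :=
  exists N, forall M, (N <= M)%N -> \sum_(i < M) f i = s.
Definition sum_eq (V : zmodType) (f g : nat -> V) : Prop :=
  exists N, forall M, (N <= M)%N -> \sum_(i < M) f i = \sum_(i < M) g i.

Section Raw.
Variables (V : zmodType) (act : grass -> V -> V).
Local Notation sc c v := (act (gcst c) v).

(* Coefficient of x0^{-l-1} x1^{-m-1} x2^{-n-1}, i-th summand, of
   x0^{-1} delta((x1-x2)/x0) X(x1) Z(x2) w *)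
Definition jD (l m n : int) (X Z : int -> V -> V) (w : V) (i : nat) : V :=
  sgnv (odd i) (sc (binz l i) (X (l + m - i%:Z) (Z (n + i%:Z) w))).
(* ... of  x0^{-1} delta((x2-x1)/(-x0)) Z(x2) X(x1) w *)
Definition jE (l m n : int) (Z X : int -> V -> V) (w : V) (i : nat) : V :=
  sgnv (odd `|l|) (sgnv (odd i)
    (sc (binz l i) (Z (l + n - i%:Z) (X (m + i%:Z) w)))).
(* ... of  sum_k k x0^{-k-1} (x1-x2)^{k-1} X(x1) Z(x2) w *)
Definition jD' (l m n : int) (X Z : int -> V -> V) (w : V) (i : nat) : V :=
  sc l%:~R (sgnv (odd i)
    (sc (binz (l - 1) i) (X (l + m - 1 - i%:Z) (Z (n + i%:Z) w)))).
(* ... of  sum_k k (-1)^k x0^{-k-1} (x2-x1)^{k-1} Z(x2) X(x1) w *)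
Definition jE' (l m n : int) (Z X : int -> V -> V) (w : V) (i : nat) : V :=
  sc l%:~R (sgnv (odd `|l|) (sgnv (odd i)
    (sc (binz (l - 1) i) (Z (l + n - 1 - i%:Z) (X (m + i%:Z) w))))).
(* ... of  x2^{-1} delta((x1-x0)/x2) Yv(W(x0), x2) w,  W(x0) = sum_q Wv q x0^{-q-1} *)
Definition jF (l m n : int) (Yv : V -> int -> V -> V) (Wv : int -> V) (w : V)
  (i : nat) : V :=
  sc (binz m i) (Yv (Wv (l + i%:Z)) (m + n - i%:Z) w).
(* ... of  sum_k k x2^{-k-1} (x1-x0)^{k-1} Yv(W(x0), x2) w *)
Definition jF' (l m n : int) (Yv : V -> int -> V -> V) (Wv : int -> V) (w : V)
  (i : nat) : V :=
  sc ((i%:R - m%:~R) * binz m i) (Yv (Wv (l + i%:Z)) (m + n - i%:Z - 1) w).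

Variables (Y0 Y1 : V -> int -> V -> V).
(* The Jacobi identity for homogeneous u (parity eu), v (parity ev),
   component by component: coefficient of x0^{-l-1} x1^{-m-1} x2^{-n-1}
   and of the monomials 1, phi1, phi2, phi1 phi2, applied to w. *)
Definition jacobi_at (eu ev : bool) (u v : V) (l m n : int) (w : V) : Prop :=
  let s := eu && ev in
  [/\ sum_eq (fun i => jD l m n (Y0 u) (Y0 v) w i
                       - sgnv s (jE l m n (Y0 v) (Y0 u) w i))
             (fun i => jF l m n Y0 (fun q => Y0 u q v) w i),
      sum_eq (fun i => jD l m n (Y1 u) (Y0 v) w i
                       - sgnv (s (+) ev) (jE l m n (Y0 v) (Y1 u) w i))
             (fun i => jF l m n Y0 (fun q => Y1 u q v) w i),
      sum_eq (fun i => sgnv eu (jD l m n (Y0 u) (Y1 v) w i)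
                       - sgnv s (jE l m n (Y1 v) (Y0 u) w i))
             (fun i => jF l m n Y1 (fun q => Y0 u q v) w i
                       - jF l m n Y0 (fun q => Y1 u q v) w i) &
      sum_eq (fun i => sgnv (~~ eu) (jD l m n (Y1 u) (Y1 v) w i)
                       - jD' l m n (Y0 u) (Y0 v) w i
                       - sgnv s (sgnv ev (jE l m n (Y1 v) (Y1 u) w i)
                                 + jE' l m n (Y0 v) (Y0 u) w i))
             (fun i => jF l m n Y1 (fun q => Y1 u q v) w i
                       - jF' l m n Y0 (fun q => Y0 u q v) w i)].

Variable tau : V.
(* Y(tau,(x,phi)) = sum G(n+1/2) x^{-n-2} + 2 phi sum L(n) x^{-n-2} *)
Definition Lraw (n : int) (w : V) : V := sc (1 / 2) (Y1 tau (n + 1) w).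
(* Graw m = G(m + 1/2) *)
Definition Graw (m : int) (w : V) : V := Y0 tau (m + 1) w.
End Raw.

(* formal variables.  Y(v,(x,phi)) = sum_n Y0 v n x^{-n-1}             *)
(*                                  + phi sum_n Y1 v n x^{-n-1},       *)
(* i.e. Y0 v n = v_n and Y1 v n = v_{n-1/2}.                           *)
(* Vpar e = V^e ; Vwt k = V_(k/2).                                      *)
Record NSVOSA (gens : pred nat) (V : zmodType) := {
  act : grass -> V -> V;
  Vpar : bool -> V -> Prop;
  Vwt : int -> V -> Prop;
  Y0 : V -> int -> V -> V;
  Y1 : V -> int -> V -> V;
  vac : V;
  tau : V;
  crank : CC;
  act_addl : forall a b v, gfin a -> gfin b -> act (gadd a b) v = act a v + act b v;
  act_addr : forall a v w, gfin a -> act a (v + w) = act a v + act a w;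
  act_mul : forall a b v, gfin a -> gfin b -> act (gmul a b) v = act a (act b v);
  act_one : forall v, act (gcst 1) v = v;
  act_proj : forall a v, gfin a -> act a v = act (gproj gens a) v;
  par_sub : forall e, Vpar e 0 /\ (forall v w, Vpar e v -> Vpar e w -> Vpar e (v - w));
  par_dec : forall v, exists v0 v1, [/\ Vpar false v0, Vpar true v1 & v = v0 + v1];
  par_dir : forall v, Vpar false v -> Vpar true v -> v = 0;
  par_act : forall e f a v, gfin a -> ghom e a -> Vpar f v -> Vpar (e (+) f) (act a v);
  wt_sub : forall k, Vwt k 0 /\ (forall v w, Vwt k v -> Vwt k w -> Vwt k (v - w));
  wt_act : forall k a v, gfin a -> Vwt k v -> Vwt k (act a v);
  wt_dec : forall v, exists s : seq (int * V),
      (forall p, p \in s -> Vwt p.1 p.2) /\ v = \sum_(p <- s) p.2;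
  wt_dir : forall s : seq (int * V), uniq (map fst s) ->
      (forall p, p \in s -> Vwt p.1 p.2) -> \sum_(p <- s) p.2 = 0 ->
      forall p, p \in s -> p.2 = 0;
  (* dim V_(k) < oo : each V_(k) is finitely generated *)
  wt_fin : forall k, exists s : seq V, (forall x, x \in s -> Vwt k x) /\
      forall v, Vwt k v -> exists c : nat -> grass, (forall i, gfin (c i)) /\
        v = \sum_(i < size s) act (c i) (nth 0 s i);
  wt_low : exists K : int, forall k v, k < K -> Vwt k v -> v = 0;
  Y_add : forall u v n w, Y0 (u + v) n w = Y0 u n w + Y0 v n w /\
                          Y1 (u + v) n w = Y1 u n w + Y1 v n w;
  Y_act : forall e a v n w, gfin a -> ghom e a ->
      Y0 (act a v) n w = act a (Y0 v n w) /\
      Y1 (act a v) n w = sgnv e (act a (Y1 v n w));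
  mode_add : forall v n w1 w2, Y0 v n (w1 + w2) = Y0 v n w1 + Y0 v n w2 /\
                               Y1 v n (w1 + w2) = Y1 v n w1 + Y1 v n w2;
  mode_act : forall e f v a n w, Vpar e v -> gfin a -> ghom f a ->
      Y0 v n (act a w) = sgnv (e && f) (act a (Y0 v n w)) /\
      Y1 v n (act a w) = sgnv ((~~ e) && f) (act a (Y1 v n w));
  mode_par : forall e f v n w, Vpar e v -> Vpar f w ->
      Vpar (e (+) f) (Y0 v n w) /\ Vpar (~~ (e (+) f)) (Y1 v n w);
  trunc : forall u v, exists N : int, forall n, N <= n -> Y0 u n v = 0 /\ Y1 u n v = 0;
  vac_par : Vpar false vac;
  vac_wt : Vwt 0 vac;
  Y_vac : forall n w, Y0 vac n w = (if n == -1 then w else 0) /\ Y1 vac n w = 0;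
  creation : forall v, Y0 v (-1) vac = v /\
      forall n, 0 <= n -> Y0 v n vac = 0 /\ Y1 v n vac = 0;
  jacobi : forall eu ev u v, Vpar eu u -> Vpar ev v ->
      forall l m n w, jacobi_at act Y0 Y1 eu ev u v l m n w;
  tau_par : Vpar true tau;
  tau_wt : Vwt 3 tau;
  NS_LL : forall (m n : int) w,
      Lraw act Y1 tau m (Lraw act Y1 tau n w) - Lraw act Y1 tau n (Lraw act Y1 tau m w)
      = act (gcst (m - n)%:~R) (Lraw act Y1 tau (m + n) w)
        + (if m + n == 0 then act (gcst ((m ^+ 3 - m)%:~R / 12%:R * crank)) w else 0);
  NS_GL : forall (m n : int) w,
      Graw Y0 tau m (Lraw act Y1 tau n w) - Lraw act Y1 tau n (Graw Y0 tau m w)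
      = act (gcst (m%:~R - (n%:~R - 1) / 2%:R)) (Graw Y0 tau (m + n) w);
  NS_GG : forall (m n : int) w,
      Graw Y0 tau m (Graw Y0 tau (n - 1) w) + Graw Y0 tau (n - 1) (Graw Y0 tau m w)
      = act (gcst 2%:R) (Lraw act Y1 tau (m + n) w)
        + (if m + n == 0 then act (gcst ((m ^+ 2 + m)%:~R / 3%:R * crank)) w else 0);
  L0_wt : forall k v, Vwt k v -> Lraw act Y1 tau 0 v = act (gcst (k%:~R / 2%:R)) v;
  (* (d/dphi + phi d/dx) Y(v,(x,phi)) = Y(G(-1/2) v,(x,phi)) *)
  G_deriv : forall v n w,
      Y0 (Graw Y0 tau (-1) v) n w = Y1 v n w /\
      Y1 (Graw Y0 tau (-1) v) n w = act (gcst (- n%:~R)) (Y0 v (n - 1) w)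
}.

Definition Lop gens V (A : NSVOSA gens V) := Lraw (act A) (Y1 A) (tau A).
Definition Gop gens V (A : NSVOSA gens V) := Graw (Y0 A) (tau A).
Definition scal gens V (A : NSVOSA gens V) (c : CC) (v : V) := act A (gcst c) v.
(* commutator of operators (the supercommutator, when the first one is even) *)
Definition opcomm (V : zmodType) (O X : V -> V) (w : V) : V := O (X w) - X (O w).

From Pilot Require Import Defs.
From mathcomp Require Import Rstruct.
From mathcomp Require Import all_boot all_order all_algebra.
From mathcomp Require Import complex finmap.
From mathcomp Require Import zify ring.
Import GRing.Theory Num.Theory.
Set Implicit Arguments. Unset Strict Implicit. Unset Printing Implicit Defensive.
Local Open Scope ring_scope.

(* The coefficient of x0^{-1} in the Jacobi identity is the super-commutator
   formula [a_m, u_n] = sum_(i >= 0) binom(m, i) (a_i u)_(m + n - i), together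
   with its three companions for the odd-variable components.  Taking a = tau,
   whose modes are tau_m = G(m - 1/2) and tau_(m - 1/2) = 2 L(m - 1), and
   m = 1 - j gives the brackets of L(-j) and G(-j + 1/2) with the modes of u.
   An even Grassmann coefficient B_j commutes with every mode and an odd one
   N_(j-1/2) super-commutes, so both factor out of the bracket.  Everything is
   additive in u, which reduces the theorem to homogeneous u, where the Jacobi
   identity applies. *)

Lemma gcst_fin c : gfin (gcst c).
Proof. by exists [:: fset0] => S; rewrite /gcst mem_seq1; case: eqP. Qed.

Lemma gcst_even c : geven (gcst c).
Proof. by move=> S; rewrite /gcst; case: eqP => // ->; rewrite cardfs0. Qed.

#[local] Hint Resolve gcst_fin gcst_even : core.

Lemma gadd_cst c1 c2 : gadd (gcst c1) (gcst c2) = gcst (c1 + c2).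
Proof. by apply: boolp.funext => S; rewrite /gadd /gcst; case: eqP; rewrite ?addr0. Qed.

Lemma gmul_cstl c a : gmul (gcst c) a = fun S => c * a S.
Proof.
apply: boolp.funext => S; rewrite /gmul.
rewrite (bigD1_seq fset0) ?fset_uniq //=; last by rewrite fpowersetE fsub0set.
rewrite big1_seq ?addr0 => [|T /andP[T_neq0 _]].
  by rewrite /gcst eqxx /gsign big_seq_fset0 expr0 mul1r fsetD0.
by rewrite /gcst (negbTE T_neq0) mulr0 mul0r.
Qed.

Lemma gmul_cstr c a : gmul a (gcst c) = fun S => a S * c.
Proof.
apply: boolp.funext => S; rewrite /gmul.
rewrite (bigD1_seq S) ?fset_uniq //=; last by rewrite fpowersetE fsubset_refl.
rewrite big1_seq ?addr0 => [|T /andP[T_neqS T_sub]].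
  by rewrite /gcst fsetDv eqxx /gsign big1 ?expr0 ?mul1r.
rewrite /gcst ifF ?mulr0 //; apply/negbTE; rewrite fsetD_eq0.
apply: contra T_neqS => S_sub; rewrite eq_sym eqEfsubset S_sub.
by rewrite -fpowersetE.
Qed.

Lemma gmul_cstC c a : gmul (gcst c) a = gmul a (gcst c).
Proof. by rewrite gmul_cstl gmul_cstr; apply: boolp.funext => S; rewrite mulrC. Qed.

Lemma gmul_cst c1 c2 : gmul (gcst c1) (gcst c2) = gcst (c1 * c2).
Proof. by rewrite gmul_cstl; apply: boolp.funext => S; rewrite /gcst; case: eqP; rewrite ?mulr0. Qed.

Lemma binz0 l : binz l 0 = 1.
Proof. by rewrite /binz big_ord0 fact0 divr1. Qed.

Lemma binz0S i : binz 0 i.+1 = 0.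
Proof. by rewrite /binz big_ord_recl /= subrr !mul0r. Qed.

Lemma sgnv0 (V : zmodType) b : sgnv b (0 : V) = 0.
Proof. by case: b; rewrite /= ?oppr0. Qed.

Lemma sgnvK (V : zmodType) b : involutive (@sgnv V b).
Proof. by case: b => v //=; rewrite opprK. Qed.

Lemma sgnvN (V : zmodType) b (v : V) : sgnv (~~ b) v = - sgnv b v.
Proof. by case: b; rewrite /= ?opprK. Qed.

Section Sums.
Variable V : zmodType.
Implicit Types (f g : nat -> V) (s t : V).

Lemma eq_sums f g s t : sums f s -> f =1 g -> s = t -> sums g t.
Proof. by move=> [N sumN] fg <-; exists N => M /sumN <-; apply: eq_bigr. Qed.

Lemma sumsD f g s t : sums f s -> sums g t -> sums (fun i => f i + g i) (s + t).
Proof.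
move=> [K1 sum1] [K2 sum2]; exists (maxn K1 K2) => M; rewrite geq_max => /andP[M1 M2].
by rewrite big_split /= sum1 ?sum2.
Qed.

Lemma sums_morph (phi : V -> V) f s : {morph phi : x y / x + y} -> phi 0 = 0 ->
  sums f s -> sums (fun i => phi (f i)) (phi s).
Proof. by move=> phiD phi0 [K sumK]; exists K => M /sumK <-; rewrite (big_morph phi phiD phi0). Qed.

Lemma sumsN f s : sums f s -> sums (fun i => - f i) (- s).
Proof. by apply: sums_morph; [apply: opprD | rewrite oppr0]. Qed.

Lemma sum_eq_sums_head f g : (forall i, f i.+1 = 0) -> Defs.sum_eq f g -> sums g (f 0%N).
Proof.
move=> f_tail0 [K sumK]; exists K.+1 => -[//|M] /ltnW /sumK <-.
by rewrite big_ord_recl big1 ?addr0 // => i _; rewrite f_tail0.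
Qed.

End Sums.

Section JacobiResidue.
Variables (V : zmodType) (act : grass -> V -> V) (Y0 Y1 : V -> int -> V -> V).
Hypotheses (act_cst0 : forall v, act (gcst 0) v = 0)
           (act_cst1 : forall v, act (gcst 1) v = v).

Lemma jacobi_residue ea eu a u m n w :
  jacobi_at act Y0 Y1 ea eu a u 0 m n w ->
  [/\ sums (jF act 0 m n Y0 (fun q => Y0 a q u) w)
           (Y0 a m (Y0 u n w) - sgnv (ea && eu) (Y0 u n (Y0 a m w))),
      sums (jF act 0 m n Y0 (fun q => Y1 a q u) w)
           (Y1 a m (Y0 u n w) - sgnv ((ea && eu) (+) eu) (Y0 u n (Y1 a m w))),
      sums (fun i => jF act 0 m n Y1 (fun q => Y0 a q u) w i
                     - jF act 0 m n Y0 (fun q => Y1 a q u) w i)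
           (sgnv ea (Y0 a m (Y1 u n w)) - sgnv (ea && eu) (Y1 u n (Y0 a m w))) &
      sums (fun i => jF act 0 m n Y1 (fun q => Y1 a q u) w i
                     - jF' act 0 m n Y0 (fun q => Y0 a q u) w i)
           (sgnv (~~ ea) (Y1 a m (Y1 u n w))
            - sgnv (ea && eu) (sgnv eu (Y1 u n (Y1 a m w))))].
Proof.
(* Only the i = 0 term of each left-hand side survives, as binom(0, i) = 0 for i > 0. *)
case=> C1 C2 C3 C4; split;
  [move: C1 | move: C2 | move: C3 | move: C4] => /sum_eq_sums_head;
  rewrite /jD /jE /jD' /jE' /= binz0 !act_cst1 ?act_cst0 !add0r ?(sgnv0, subr0, addr0);
  apply=> i; by rewrite binz0S !act_cst0 ?(sgnv0, subr0, addr0).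
Qed.

End JacobiResidue.

Section NSVOSAFacts.
Variables (gens : pred nat) (V : zmodType) (A : NSVOSA gens V).
Local Notation sc c v := (act A (gcst c) v).

Lemma act0 a : gfin a -> act A a 0 = 0.
Proof. by move=> a_fin; apply: (addrI (act A a 0)); rewrite -act_addr // !addr0. Qed.

Lemma actN a v : gfin a -> act A a (- v) = - act A a v.
Proof. by move=> a_fin; apply/eqP; rewrite -subr_eq0 opprK -act_addr // addNr act0. Qed.

Lemma actB a v w : gfin a -> act A a (v - w) = act A a v - act A a w.
Proof. by move=> a_fin; rewrite act_addr // actN. Qed.

Lemma act_sgnv a b v : gfin a -> act A a (sgnv b v) = sgnv b (act A a v).
Proof. by case: b => a_fin //=; rewrite actN. Qed.

Lemma scalD c1 c2 v : sc (c1 + c2) v = sc c1 v + sc c2 v.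
Proof. by rewrite -gadd_cst act_addl. Qed.

Lemma scal0 v : sc 0 v = 0.
Proof. by apply: (addrI (sc 0 v)); rewrite -scalD !addr0. Qed.

Lemma scalN c v : sc (- c) v = - sc c v.
Proof. by apply/eqP; rewrite -subr_eq0 opprK -scalD addNr scal0. Qed.

Lemma scalM c1 c2 v : sc c1 (sc c2 v) = sc (c1 * c2) v.
Proof. by rewrite -gmul_cst act_mul. Qed.

Lemma act_scal a c v : gfin a -> act A a (sc c v) = sc c (act A a v).
Proof. by move=> a_fin; rewrite -!act_mul ?gmul_cstC. Qed.

Lemma Y0_act_even a v n w : gfin a -> geven a -> Y0 A (act A a v) n w = act A a (Y0 A v n w).
Proof. by move=> a_fin a_even; case: (Y_act A v n w a_fin (a_even : ghom false a)). Qed.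

Lemma Y1_act_even a v n w : gfin a -> geven a -> Y1 A (act A a v) n w = act A a (Y1 A v n w).
Proof. by move=> a_fin a_even; case: (Y_act A v n w a_fin (a_even : ghom false a)). Qed.

Lemma Y0_act_odd a v n w : gfin a -> godd a -> Y0 A (act A a v) n w = act A a (Y0 A v n w).
Proof. by move=> a_fin a_odd; case: (Y_act A v n w a_fin (a_odd : ghom true a)). Qed.

Lemma Y1_act_odd a v n w : gfin a -> godd a -> Y1 A (act A a v) n w = - act A a (Y1 A v n w).
Proof. by move=> a_fin a_odd; case: (Y_act A v n w a_fin (a_odd : ghom true a)). Qed.

Lemma Y0_scal c v n w : Y0 A (sc c v) n w = sc c (Y0 A v n w).
Proof. exact: Y0_act_even (gcst_fin c) (gcst_even c). Qed.

Lemma Y1_scal c v n w : Y1 A (sc c v) n w = sc c (Y1 A v n w).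
Proof. exact: Y1_act_even (gcst_fin c) (gcst_even c). Qed.

Lemma Y0D u v n w : Y0 A (u + v) n w = Y0 A u n w + Y0 A v n w.
Proof. by case: (Y_add A u v n w). Qed.

Lemma Y1D u v n w : Y1 A (u + v) n w = Y1 A u n w + Y1 A v n w.
Proof. by case: (Y_add A u v n w). Qed.

Lemma mode0_act_even e v a n w : Vpar A e v -> gfin a -> geven a ->
  Y0 A v n (act A a w) = act A a (Y0 A v n w).
Proof. by move=> v_e a_fin a_even; case: (mode_act n w v_e a_fin (a_even : ghom false a)) => [-> _]; rewrite andbF. Qed.

Lemma mode1_act_even e v a n w : Vpar A e v -> gfin a -> geven a ->
  Y1 A v n (act A a w) = act A a (Y1 A v n w).
Proof. by move=> v_e a_fin a_even; case: (mode_act n w v_e a_fin (a_even : ghom false a)) => [_ ->]; rewrite andbF. Qed.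

Lemma mode0_act_odd e v a n w : Vpar A e v -> gfin a -> godd a ->
  Y0 A v n (act A a w) = sgnv e (act A a (Y0 A v n w)).
Proof. by move=> v_e a_fin a_odd; case: (mode_act n w v_e a_fin (a_odd : ghom true a)) => [-> _]; rewrite andbT. Qed.

Lemma mode1_act_odd e v a n w : Vpar A e v -> gfin a -> godd a ->
  Y1 A v n (act A a w) = sgnv (~~ e) (act A a (Y1 A v n w)).
Proof. by move=> v_e a_fin a_odd; case: (mode_act n w v_e a_fin (a_odd : ghom true a)) => [_ ->]; rewrite andbT. Qed.

Lemma LopD k v w : Lop A k (v + w) = Lop A k v + Lop A k w.
Proof. by rewrite /Lop /Lraw (proj2 (mode_add A _ _ _ _)) act_addr. Qed.

Lemma GopD k v w : Gop A k (v + w) = Gop A k v + Gop A k w.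
Proof. by rewrite /Gop /Graw (proj1 (mode_add A _ _ _ _)). Qed.

Lemma sums_act a f s : gfin a -> sums f s -> sums (fun i => act A a (f i)) (act A a s).
Proof. by move=> a_fin; apply: sums_morph => [x y|]; rewrite ?act_addr ?act0. Qed.

Section Commutators.
Variables (eu : bool) (u : V) (j : nat) (n : int) (w : V).
Hypothesis u_eu : Vpar A eu u.
Let residue := jacobi_residue scal0 (act_one A) (jacobi (tau_par A) u_eu 0 (1 - j%:Z) n w).

Lemma mode_index (i : nat) : n - j%:Z - i%:Z + 1 = 1 - j%:Z + n - i%:Z.
Proof. by lia. Qed.

Lemma opcomm_actL_Y0 b : gfin b -> geven b ->
  sums (fun i : nat => scal A (binz (1 - j%:Z) i)
          (Y0 A (act A b (Lop A (i%:Z - 1) u)) (n - j%:Z - i%:Z + 1) w))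
       (opcomm (fun v => act A b (Lop A (- j%:Z) v)) (Y0 A u n) w).
Proof.
move=> b_fin b_even; have [_ C _ _] := residue; rewrite /= addbb in C.
apply: (eq_sums (sums_act b_fin (sums_act (gcst_fin (1 / 2)) C))) => [i|].
  rewrite /scal /Lop /Lraw /jF Y0_act_even // Y0_scal subrK add0r mode_index.
  by rewrite !(act_scal _ _ b_fin) !scalM mulrC.
rewrite /opcomm /Lop /Lraw !(mode0_act_even _ _ u_eu) //.
by rewrite -!actB // [- _ + 1]addrC.
Qed.

Lemma opcomm_actL_Y1 b : gfin b -> geven b ->
  sums (fun i : nat => scal A (binz (1 - j%:Z) i)
          (Y1 A (act A b (Lop A (i%:Z - 1) u)) (n - j%:Z - i%:Z + 1) w
           + scal A ((1 - j%:R - i%:R) / 2%:R)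
               (Y0 A (act A b (Gop A (i%:Z - 1) u)) (n - j%:Z - i%:Z) w)))
       (opcomm (fun v => act A b (Lop A (- j%:Z) v)) (Y1 A u n) w).
Proof.
(* The factor i - m of jF', with m = 1 - j, produces the coefficient (1 - j - i) / 2
   of the G-term. *)
move=> b_fin b_even; have [_ _ _ C] := residue.
apply: (eq_sums (sums_act b_fin (sums_act (gcst_fin (1 / 2)) C))) => [i|].
  rewrite /scal /Gop /Graw /Lop /Lraw /jF /jF' Y1_act_even // Y0_act_even // Y1_scal.
  rewrite subrK add0r mode_index (_ : n - j%:Z - i%:Z = 1 - j%:Z + n - i%:Z - 1); last by lia.
  rewrite !actB // !act_addr // !(act_scal _ _ b_fin) !scalM -scalN.
  congr (sc _ _ + sc _ _); first by rewrite mulrC.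
  by rewrite intrB mulr1z; field.
rewrite /opcomm /Lop /Lraw !(mode1_act_even _ _ u_eu) //= sgnvK.
by rewrite -!actB // [- _ + 1]addrC.
Qed.

Lemma opcomm_actG_Y0 b : gfin b -> godd b ->
  sums (fun i : nat => scal A (binz (1 - j%:Z) i)
          (Y0 A (act A b (Gop A (i%:Z - 1) u)) (n - j%:Z - i%:Z + 1) w))
       (opcomm (fun v => act A b (Gop A (- j%:Z) v)) (Y0 A u n) w).
Proof.
move=> b_fin b_odd; have [C _ _ _] := residue.
apply: (eq_sums (sums_act b_fin C)) => [i|].
  rewrite /scal /Gop /Graw /jF Y0_act_odd // subrK add0r mode_index.
  by rewrite (act_scal _ _ b_fin).
rewrite /opcomm /Gop /Graw (mode0_act_odd _ _ u_eu) //=.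
by rewrite -act_sgnv // -actB // [- _ + 1]addrC.
Qed.

Lemma opcomm_actG_Y1 b : gfin b -> godd b ->
  sums (fun i : nat => scal A (binz (1 - j%:Z) i)
          (scal A 2%:R (Y0 A (act A b (Lop A (i%:Z - 1) u)) (n - j%:Z - i%:Z + 1) w)
           + Y1 A (act A b (Gop A (i%:Z - 1) u)) (n - j%:Z - i%:Z + 1) w))
       (opcomm (fun v => act A b (Gop A (- j%:Z) v)) (Y1 A u n) w).
Proof.
(* Moving the odd b out of Y1 _ costs a sign, hence the negated series. *)
move=> b_fin b_odd; have [_ _ C _] := residue.
apply: (eq_sums (sumsN (sums_act b_fin C))) => [i|].
  rewrite /scal /Gop /Graw /Lop /Lraw /jF Y0_act_odd // Y1_act_odd // Y0_scal.
  rewrite subrK add0r mode_index -actN // opprB actB // !(act_scal _ _ b_fin) scalM.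
  have -> : 2%:R * (1 / 2) = 1 :> CC by field.
  by rewrite act_one actB.
rewrite /opcomm /Gop /Graw (mode1_act_odd _ _ u_eu) //= sgnvN [- _ + 1]addrC.
by rewrite actB // actN // act_sgnv // opprD !opprK.
Qed.

End Commutators.

Lemma sums_homogeneous (F : V -> nat -> V) (S : V -> V) :
  (forall e x, Vpar A e x -> sums (F x) (S x)) ->
  (forall x y i, F (x + y) i = F x i + F y i) -> {morph S : x y / x + y} ->
  forall u, sums (F u) (S u).
Proof.
move=> F_hom FD SD u; have [u0 [u1 [u0_even u1_odd ->]]] := par_dec A u.
by apply: (eq_sums (sumsD (F_hom _ _ u0_even) (F_hom _ _ u1_odd))) => [i|]; rewrite ?FD ?SD.
Qed.

End NSVOSAFacts.

Unset Implicit Arguments.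

Theorem mainTheorem2 (gens : pred nat) (V : zmodType) (A : NSVOSA gens V)
  (B N : nat -> grass)
  (HB : forall j, (0 < j)%N -> gfin (B j) /\ geven (B j))
  (HN : forall j, (0 < j)%N -> gfin (N j) /\ godd (N j))
  (u : V) :
  forall (j : nat), (0 < j)%N -> forall (n : int) (w : V),
  let OB := fun v => act A (B j) (Lop A (- j%:Z) v) in
  let ON := fun v => act A (N j) (Gop A (- j%:Z) v) in
  [/\ sums (fun i : nat => scal A (binz (1 - j%:Z) i)
              (Y0 A (act A (B j) (Lop A (i%:Z - 1) u)) (n - j%:Z - i%:Z + 1) w))
           (opcomm OB (Y0 A u n) w),
      sums (fun i : nat => scal A (binz (1 - j%:Z) i)
              (Y1 A (act A (B j) (Lop A (i%:Z - 1) u)) (n - j%:Z - i%:Z + 1) w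
               + scal A ((1 - j%:R - i%:R) / 2%:R)
                   (Y0 A (act A (B j) (Gop A (i%:Z - 1) u)) (n - j%:Z - i%:Z) w)))
           (opcomm OB (Y1 A u n) w),
      sums (fun i : nat => scal A (binz (1 - j%:Z) i)
              (Y0 A (act A (N j) (Gop A (i%:Z - 1) u)) (n - j%:Z - i%:Z + 1) w))
           (opcomm ON (Y0 A u n) w) &
      sums (fun i : nat => scal A (binz (1 - j%:Z) i)
              (scal A 2%:R (Y0 A (act A (N j) (Lop A (i%:Z - 1) u)) (n - j%:Z - i%:Z + 1) w)
               + Y1 A (act A (N j) (Gop A (i%:Z - 1) u)) (n - j%:Z - i%:Z + 1) w))
           (opcomm ON (Y1 A u n) w)].
Proof.
move=> j j_gt0 n w OB ON; have [Bfin Beven] := HB j j_gt0; have [Nfin Nodd] := HN j j_gt0.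
split; [ apply: (sums_homogeneous (fun e x x_e => opcomm_actL_Y0 j n w x_e Bfin Beven))
      | apply: (sums_homogeneous (fun e x x_e => opcomm_actL_Y1 j n w x_e Bfin Beven))
      | apply: (sums_homogeneous (fun e x x_e => opcomm_actG_Y0 j n w x_e Nfin Nodd))
      | apply: (sums_homogeneous (fun e x x_e => opcomm_actG_Y1 j n w x_e Nfin Nodd)) ].
all: move=> x y; rewrite /scal /opcomm; try move=> i.
all: by rewrite !(LopD, GopD, Y0D, Y1D, act_addr) // ?opprD addrACA.
Qed.
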